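(* Let $I$ be a compact interval and $f:I\to\mathcal{K}(\mathbb{R})$ a continuous set-valued function such that $\dim_A(\mathcal{G}(f))>1$. Then $\dim_A\Delta(\mathcal{G}(f))=1$.
   Context: $\mathcal{K}(\mathbb{R})$: non-empty compact subsets of $\mathbb{R}$ with the Hausdorff distance. $\mathcal{G}(f)=\{(x,y)\in I\times\mathbb{R}:y\in f(x)\}\subseteq\mathbb{R}^2$, and $\Delta(\mathcal{G}(f))=\{|x-x_*|+|y-y_*|:x,x_*\in I,\ y\in f(x),\ y_*\in f(x_* )\}$. $\dim_A$ denotes Assouad dimension. *)

From Stdlib Require Import Reals List.
From Coquelicot Require Import Coquelicot.
Open Scope R_scope.

Definition nonempty_compact (A : R -> Prop) : Prop :=
  (exists y, A y) /\ compact A.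

Definition point_set_dist (a : R) (B : R -> Prop) : Rbar :=
  Glb_Rbar (fun t => exists b, B b /\ t = Rabs (a - b)).

(** Hausdorff distance:
    max (sup_{a in A} d(a,B), sup_{b in B} d(b,A)),
    written as the sup of the union of the two families of values. *)
Definition hausdorff_dist (A B : R -> Prop) : Rbar :=
  Lub_Rbar (fun t => (exists a, A a /\ point_set_dist a B = Finite t)
                  \/ (exists b, B b /\ point_set_dist b A = Finite t)).

Definition hausdorff_continuous_on (a b : R) (f : R -> R -> Prop) : Prop :=
  forall x, a <= x <= b -> forall eps, 0 < eps ->
    exists delta, 0 < delta /\
      forall y, a <= y <= b -> Rabs (x - y) < delta ->
        Rbar_lt (hausdorff_dist (f x) (f y)) (Finite eps).

Definition graph_of (a b : R) (f : R -> R -> Prop) (p : R * R) : Prop :=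
  a <= fst p <= b /\ f (fst p) (snd p).

Definition delta_set (G : R * R -> Prop) (t : R) : Prop :=
  exists p q, G p /\ G q /\ t = Rabs (fst p - fst q) + Rabs (snd p - snd q).

Definition dist2 (p q : R * R) : R :=
  sqrt ((fst p - fst q) ^ 2 + (snd p - snd q) ^ 2).
Definition dist1 (x y : R) : R := Rabs (x - y).

Definition covered_by {X : Type} (d : X -> X -> R) (E : X -> Prop)
  (r : R) (n : nat) : Prop :=
  exists l : list X, length l = n /\
    forall x, E x -> exists c, In c l /\ d x c <= r.

Definition assouad_admissible {X : Type} (d : X -> X -> R) (F : X -> Prop)
  (s : R) : Prop :=
  0 <= s /\ exists C, 0 < C /\
    forall x r R0, F x -> 0 < r -> r < R0 ->
      exists n, covered_by d (fun y => F y /\ d x y <= R0) r n /\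
                INR n <= C * Rpower (R0 / r) s.

(** Assouad dimension: infimum of admissible exponents (+oo if none). *)
Definition assouad_dim {X : Type} (d : X -> X -> R) (F : X -> Prop) : Rbar :=
  Glb_Rbar (assouad_admissible d F).

From Stdlib Require Import Reals Lra Lia List Classical.
From Coquelicot Require Import Coquelicot.
Open Scope R_scope.

(* When a < b, the distance set contains the whole interval [0, b - a]: distances
   from a fixed point over a to nearest points of the fibres vary continuously.
   A subset of the line containing an interval has Assouad dimension exactly 1.
   The hypothesis on the graph only rules out a = b, where the graph lies on a
   vertical line and so has dimension at most 1. *)

Lemma interval_covered_by_centers (r : R) (n : nat) : 0 < r ->
  forall u y, u <= y <= u + 2 * r * INR (S n) ->
  exists k, (k <= n)%nat /\ Rabs (y - (u + r + 2 * r * INR k)) <= r.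
Proof.
  intros Hr; induction n as [|n IH]; intros u y Hy.
  - exists 0%nat. split; [lia|]. simpl in *. apply Rabs_le_between. lra.
  - destruct (Rle_lt_dec y (u + 2 * r)) as [Hle|Hgt].
    + exists 0%nat. split; [lia|]. simpl. apply Rabs_le_between. lra.
    + destruct (IH (u + 2 * r) y) as [k [Hk Hc]].
      { rewrite S_INR in Hy. lra. }
      exists (S k). split; [lia|]. rewrite S_INR.
      replace (u + r + 2 * r * (INR k + 1)) with (u + 2 * r + r + 2 * r * INR k) by ring.
      exact Hc.
Qed.

Lemma ball_covered_R (x r R0 : R) : 0 < r -> r < R0 ->
  exists l : list R, INR (length l) <= 2 * (R0 / r) /\
    forall y, Rabs (x - y) <= R0 -> exists c, In c l /\ Rabs (y - c) <= r.
Proof.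
  intros Hr HR.
  assert (Hq : 1 < R0 / r) by (apply (Rmult_lt_reg_r r); [lra|]; field_simplify; lra).
  destruct (nfloor1_ex (R0 / r)) as [n Hn]; [lra|].
  exists (map (fun k => x - R0 + r + 2 * r * INR k) (seq 0 (S n))). split.
  - rewrite length_map, length_seq, S_INR. lra.
  - intros y Hy. apply Rabs_le_between in Hy.
    destruct (interval_covered_by_centers r n Hr (x - R0) y) as [k [Hk Hc]].
    { assert (R0 <= r * INR (S n)).
      { rewrite S_INR. replace R0 with (r * (R0 / r)) at 1 by (field; lra).
        apply Rmult_le_compat_l; lra. }
      lra. }
    exists (x - R0 + r + 2 * r * INR k). split; [|exact Hc].
    apply in_map_iff. exists k. split; [reflexivity|]. apply in_seq. lia.
Qed.

(* [h] extends the inverse of the embedding [g] to all of [R], so that covering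
   centres on the line can be pulled back to [X]. *)
Lemma assouad_admissible_1_line_isometric {X : Type} (d : X -> X -> R)
    (E : X -> Prop) (h : R -> X) (g : X -> R) :
  (forall x, E x -> h (g x) = x) ->
  (forall x c, E x -> d x (h c) = Rabs (g x - c)) ->
  assouad_admissible d E 1.
Proof.
  intros Hhg Hd. split; [lra|]. exists 2. split; [lra|].
  intros x r R0 Ex Hr HR.
  destruct (ball_covered_R (g x) r R0 Hr HR) as [l [Hl Hc]].
  exists (length (map h l)). split.
  - exists (map h l). split; [reflexivity|]. intros y [Ey Hy].
    rewrite <- (Hhg y Ey), Hd in Hy by exact Ex.
    destruct (Hc (g y) Hy) as [c [Hcl Hcy]].
    exists (h c). split; [now apply in_map|]. now rewrite Hd.
  - rewrite length_map, Rpower_1; [lra|]. apply Rdiv_lt_0_compat; lra.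
Qed.

Lemma assouad_admissible_1_R (E : R -> Prop) : assouad_admissible dist1 E 1.
Proof.
  apply (assouad_admissible_1_line_isometric _ _ (fun c => c) (fun x => x)); reflexivity.
Qed.

Lemma dist2_same_fst p q : fst p = fst q -> dist2 p q = Rabs (snd p - snd q).
Proof.
  intros H. unfold dist2. rewrite H, Rminus_diag, <- sqrt_Rsqr_abs.
  f_equal. unfold Rsqr. ring.
Qed.

Lemma graph_degenerate_admissible_1 (a : R) (f : R -> R -> Prop) :
  assouad_admissible dist2 (graph_of a a f) 1.
Proof.
  apply (assouad_admissible_1_line_isometric _ _ (fun c => (a, c)) snd).
  - intros [x y] [Hx _]. simpl in *. f_equal. lra.
  - intros p c [Hp _]. apply dist2_same_fst. simpl. lra.
Qed.

Definition point_set_distR (y0 : R) (B : R -> Prop) : R := real (point_set_dist y0 B).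

Lemma point_set_distR_spec y0 B : (exists b, B b) ->
  point_set_dist y0 B = Finite (point_set_distR y0 B) /\
  (forall b, B b -> point_set_distR y0 B <= Rabs (y0 - b)) /\
  (forall e, 0 < e -> exists b, B b /\ Rabs (y0 - b) < point_set_distR y0 B + e).
Proof.
  intros [b0 Hb0]. unfold point_set_distR, point_set_dist.
  set (D := fun t => exists b, B b /\ t = Rabs (y0 - b)).
  destruct (Glb_Rbar_correct D) as [Hlb Hgr].
  assert (H0 : Rbar_le (Finite 0) (Glb_Rbar D)).
  { apply Hgr. intros t [b [_ ->]]. apply Rabs_pos. }
  assert (H1 : Rbar_le (Glb_Rbar D) (Finite (Rabs (y0 - b0)))).
  { apply Hlb. now exists b0. }
  destruct (Glb_Rbar D) as [m| |]; simpl in H0, H1; try contradiction.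
  split; [reflexivity|]. split.
  - intros b Hb. apply (Hlb (Rabs (y0 - b))). now exists b.
  - intros e He. apply NNPP. intro Hn.
    assert (Hl : Rbar_le (Finite (m + e)) (Finite m)).
    { apply Hgr. intros t [b [Hb ->]]. simpl. apply Rnot_lt_le. intro Hc.
      apply Hn. now exists b. }
    simpl in Hl. lra.
Qed.

Lemma point_set_distR_nonneg y0 B : (exists b, B b) -> 0 <= point_set_distR y0 B.
Proof.
  intros HB. destruct (point_set_distR_spec y0 B HB) as [_ [_ Happrox]].
  apply Rnot_lt_le. intro Hneg.
  destruct (Happrox (- point_set_distR y0 B)) as [b [_ Hb]]; [lra|].
  pose proof (Rabs_pos (y0 - b)). lra.
Qed.

(* Closedness of [B] forces one of the two candidates [y0 +- m] to lie in [B]. *)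
Lemma point_set_distR_attained y0 B : nonempty_compact B ->
  exists y, B y /\ Rabs (y0 - y) = point_set_distR y0 B.
Proof.
  intros [HB Hc]. destruct (point_set_distR_spec y0 B HB) as [_ [Hlb Happrox]].
  pose proof (point_set_distR_nonneg y0 B HB) as Hm0.
  set (m := point_set_distR y0 B) in *.
  apply NNPP. intro Hn.
  assert (Hout : forall y, Rabs (y0 - y) = m -> ~ B y) by (intros y Hy HBy; eauto).
  destruct (compact_P2 B Hc (y0 + m)) as [d1 Hd1].
  { apply Hout. replace (y0 - (y0 + m)) with (- m) by ring.
    rewrite Rabs_Ropp. apply Rabs_right. lra. }
  destruct (compact_P2 B Hc (y0 - m)) as [d2 Hd2].
  { apply Hout. replace (y0 - (y0 - m)) with m by ring. apply Rabs_right. lra. }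
  destruct (Happrox (Rmin d1 d2)) as [b [Hb Hbm]].
  { apply Rmin_pos; apply cond_pos. }
  pose proof (Hlb b Hb). pose proof (Rmin_l d1 d2). pose proof (Rmin_r d1 d2).
  destruct (Rle_lt_dec y0 b).
  - apply (Hd1 b); [|exact Hb]. unfold disc. rewrite Rabs_minus_sym in *.
    rewrite Rabs_right in * by lra. apply Rabs_def1; lra.
  - apply (Hd2 b); [|exact Hb]. unfold disc.
    rewrite Rabs_right in * by lra. apply Rabs_def1; lra.
Qed.

Lemma hausdorff_dist_sym A B : hausdorff_dist A B = hausdorff_dist B A.
Proof. unfold hausdorff_dist. apply Lub_Rbar_eqset. intro t. tauto. Qed.

Lemma hausdorff_dist_lt_close A B eps : (exists b, B b) ->
  Rbar_lt (hausdorff_dist A B) (Finite eps) ->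
  forall a, A a -> exists b, B b /\ Rabs (a - b) < eps.
Proof.
  intros HB Hh a Ha. destruct (point_set_distR_spec a B HB) as [Heq [_ Happrox]].
  unfold hausdorff_dist in Hh.
  destruct (Lub_Rbar_correct (fun t => (exists a, A a /\ point_set_dist a B = Finite t)
                  \/ (exists b, B b /\ point_set_dist b A = Finite t))) as [Hub _].
  pose proof (Hub _ (or_introl (ex_intro _ a (conj Ha Heq)))) as Hle.
  destruct (Lub_Rbar _); simpl in Hle, Hh; try contradiction.
  destruct (Happrox (eps - point_set_distR a B)) as [b [Hb Hab]]; [lra|].
  exists b. split; [exact Hb|lra].
Qed.

Lemma point_set_distR_le_of_close y0 A B eps : (exists a, A a) -> (exists b, B b) ->
  (forall a, A a -> exists b, B b /\ Rabs (a - b) < eps) ->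
  point_set_distR y0 B - eps <= point_set_distR y0 A.
Proof.
  intros HA HB Hclose.
  destruct (point_set_distR_spec y0 A HA) as [_ [_ HapproxA]].
  destruct (point_set_distR_spec y0 B HB) as [_ [HlbB _]].
  apply Rnot_lt_le. intro Hn.
  destruct (HapproxA (point_set_distR y0 B - eps - point_set_distR y0 A))
    as [a [Ha Hya]]; [lra|].
  destruct (Hclose a Ha) as [b [Hb Hab]].
  pose proof (HlbB b Hb).
  pose proof (Rabs_triang (y0 - a) (a - b)).
  replace (y0 - a + (a - b)) with (y0 - b) in * by ring.
  lra.
Qed.

Lemma point_set_distR_hausdorff_lip y0 A B eps : (exists a, A a) -> (exists b, B b) ->
  Rbar_lt (hausdorff_dist A B) (Finite eps) ->
  Rabs (point_set_distR y0 A - point_set_distR y0 B) <= eps.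
Proof.
  intros HA HB Hh.
  pose proof (hausdorff_dist_lt_close A B eps HB Hh).
  rewrite hausdorff_dist_sym in Hh.
  pose proof (hausdorff_dist_lt_close B A eps HA Hh).
  pose proof (point_set_distR_le_of_close y0 A B eps HA HB).
  pose proof (point_set_distR_le_of_close y0 B A eps HB HA).
  apply Rabs_le; intuition lra.
Qed.

(* Extending a function on [a, b] by [x |-> F (clamp a b x)] makes it continuous on
   all of [R], as required by the intermediate value theorem of the library. *)
Definition clamp (a b x : R) : R := Rmax a (Rmin b x).

Lemma clamp_in a b x : a <= b -> a <= clamp a b x <= b.
Proof. intros. unfold clamp, Rmax, Rmin. repeat destruct Rle_dec; lra. Qed.

Lemma clamp_id a b x : a <= x <= b -> clamp a b x = x.
Proof. intros. unfold clamp, Rmax, Rmin. repeat destruct Rle_dec; lra. Qed.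

Lemma clamp_lip a b x y : a <= b -> Rabs (clamp a b x - clamp a b y) <= Rabs (x - y).
Proof.
  intros. unfold clamp, Rmax, Rmin.
  repeat destruct Rle_dec; unfold Rabs; repeat destruct Rcase_abs; lra.
Qed.

Lemma continuity_clamp a b : a <= b -> continuity (clamp a b).
Proof.
  intros Hab x eps Heps. exists eps. split; [exact Heps|].
  intros y [_ Hy]. simpl in *. unfold R_dist in *.
  eapply Rle_lt_trans; [apply clamp_lip|]; assumption.
Qed.

Lemma continuity_point_set_distR_clamp a b f y0 : a <= b ->
  (forall x, a <= x <= b -> exists y, f x y) -> hausdorff_continuous_on a b f ->
  continuity (fun x => point_set_distR y0 (f (clamp a b x))).
Proof.
  intros Hab Hne Hc x0 eps Heps. simpl. unfold R_dist.
  destruct (Hc (clamp a b x0) (clamp_in a b x0 Hab) (eps / 2)) as [d [Hd Hclose]]; [lra|].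
  exists d. split; [exact Hd|]. intros x [_ Hx].
  rewrite Rabs_minus_sym.
  eapply Rle_lt_trans; [apply point_set_distR_hausdorff_lip with (eps := eps / 2)|lra].
  - apply Hne, clamp_in, Hab.
  - apply Hne, clamp_in, Hab.
  - apply Hclose; [apply clamp_in, Hab|].
    eapply Rle_lt_trans; [apply clamp_lip, Hab|]. now rewrite Rabs_minus_sym.
Qed.

(* Fix [y0] in [f a]. The map [x |-> (x - a) + d(y0, f x)] is continuous, vanishes
   at [a] and is at least [b - a] at [b]; each of its values is a distance between
   [(a, y0)] and a nearest point of the fibre over [x]. *)
Lemma delta_set_contains_interval a b f : a <= b ->
  (forall x, a <= x <= b -> nonempty_compact (f x)) -> hausdorff_continuous_on a b f ->
  forall t, 0 <= t <= b - a -> delta_set (graph_of a b f) t.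
Proof.
  intros Hab Hf Hc t Ht.
  assert (Hne : forall x, a <= x <= b -> exists y, f x y) by (intros; now apply Hf).
  destruct (Hne a) as [y0 Hy0]; [lra|].
  set (phi := fun x => clamp a b x - a + point_set_distR y0 (f (clamp a b x))).
  assert (Hphi : continuity phi).
  { apply continuity_plus.
    - apply continuity_minus; [now apply continuity_clamp|].
      apply continuity_const. now intros ? ?.
    - now apply continuity_point_set_distR_clamp. }
  assert (Hphia : phi a = 0).
  { unfold phi. rewrite clamp_id by lra.
    destruct (point_set_distR_spec y0 (f a) (ex_intro _ y0 Hy0)) as [_ [Hlb _]].
    pose proof (Hlb y0 Hy0). pose proof (point_set_distR_nonneg y0 _ (ex_intro _ y0 Hy0)).
    rewrite Rminus_diag, Rabs_R0 in *. lra. }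
  assert (Hphib : b - a <= phi b).
  { unfold phi. rewrite clamp_id by lra.
    pose proof (point_set_distR_nonneg y0 _ (Hne b ltac:(lra))). lra. }
  destruct (IVT_gen phi a b t Hphi) as [x [Hx Hphix]].
  { rewrite Hphia, Rmin_left, Rmax_right; lra. }
  rewrite Rmin_left, Rmax_right in Hx by lra.
  unfold phi in Hphix. rewrite clamp_id in Hphix by exact Hx.
  destruct (point_set_distR_attained y0 (f x) (Hf x Hx)) as [y [Hy Hyd]].
  exists (a, y0), (x, y). unfold graph_of; simpl.
  split; [split; [lra|exact Hy0]|]. split; [split; [exact Hx|exact Hy]|].
  rewrite Hyd, Rabs_minus_sym, Rabs_right by lra. lra.
Qed.

Lemma covering_separated_points (l : list R) (r : R) (p : nat -> R) (m : nat) :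
  (forall i j, (i < j <= m)%nat -> 2 * r < Rabs (p i - p j)) ->
  (forall k, (k <= m)%nat -> exists c, In c l /\ Rabs (p k - c) <= r) ->
  (S m <= length l)%nat.
Proof.
  revert l. induction m as [|m IH]; intros l Hsep Hcov.
  - destruct (Hcov 0%nat (le_n 0)) as [c [Hc _]].
    destruct l; [destruct Hc|simpl; lia].
  - destruct (Hcov (S m) (le_n _)) as [c [Hc Hpc]].
    assert (S m <= length (remove Req_dec_T c l))%nat.
    { apply IH; [intros i j Hij; apply Hsep; lia|].
      intros k Hk. destruct (Hcov k ltac:(lia)) as [c' [Hc' Hpc']].
      exists c'. split; [|exact Hpc'].
      apply in_in_remove; [|exact Hc']. intros ->.
      pose proof (Hsep k (S m) ltac:(lia)).
      pose proof (Rabs_triang (p k - c) (c - p (S m))).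
      rewrite (Rabs_minus_sym c) in *.
      replace (p k - c + (c - p (S m))) with (p k - p (S m)) in * by ring.
      lra. }
    pose proof (remove_length_lt Req_dec_T l c Hc). lia.
Qed.

Lemma nat_beats_power (s K : R) : s < 1 -> 0 < K ->
  exists m : nat, K * Rpower (INR (S m)) s < INR (S m).
Proof.
  intros Hs HK.
  set (T := Rpower K (1 / (1 - s))).
  destruct (nfloor_ex (Rmax T 1)) as [m Hm].
  { pose proof (Rmax_r T 1). lra. }
  exists m. set (N := INR (S m)).
  assert (HTN : T < N) by (unfold N; rewrite S_INR; pose proof (Rmax_l T 1); lra).
  assert (HN1 : 1 < N) by (unfold N; rewrite S_INR; pose proof (Rmax_r T 1); lra).
  assert (HK1 : K < Rpower N (1 - s)).
  { replace K with (Rpower T (1 - s)).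
    - apply Rlt_Rpower_l; [lra|]. split; [apply exp_pos|exact HTN].
    - unfold T. rewrite Rpower_mult.
      replace (1 / (1 - s) * (1 - s)) with 1 by (field; lra).
      apply Rpower_1, HK. }
  replace N with (Rpower N (1 - s) * Rpower N s) at 2.
  - apply Rmult_lt_compat_r; [apply exp_pos|exact HK1].
  - rewrite <- Rpower_plus. replace (1 - s + s) with 1 by ring. apply Rpower_1. lra.
Qed.

(* For [N = m + 1], the points [k L / N], [k <= m], are [L / N]-separated in [[0, L]],
   so covering them by balls of radius [L / (3 N)] takes [N] balls, while
   admissibility of [s] gives at most [C (3 N)^s] of them. *)
Lemma assouad_admissible_interval_ge_1 (E : R -> Prop) (L s : R) : 0 < L ->
  (forall t, 0 <= t <= L -> E t) -> assouad_admissible dist1 E s -> 1 <= s.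
Proof.
  intros HL HE [Hs0 [C [HC Hadm]]].
  apply Rnot_lt_le. intro Hs.
  set (K := C * Rpower 3 s).
  assert (HK : 0 < K) by (apply Rmult_lt_0_compat; [exact HC|apply exp_pos]).
  destruct (nat_beats_power s K Hs HK) as [m Hm].
  set (N := INR (S m)) in *.
  assert (HmN : INR m + 1 = N) by (unfold N; rewrite S_INR; ring).
  pose proof (pos_INR m).
  set (h := L / N). set (r := L / (3 * N)).
  assert (Hh : 0 < h) by (apply Rdiv_lt_0_compat; lra).
  assert (HNh : N * h = L) by (unfold h; field; lra).
  assert (Hr : 3 * r = h) by (unfold r, h; field; lra).
  destruct (Hadm 0 r L (HE 0 ltac:(lra))) as [n [[l [Hl Hcov]] Hn]]; [lra|nra|].
  assert (Hcount : (S m <= n)%nat).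
  { rewrite <- Hl. apply (covering_separated_points l r (fun k => INR k * h) m).
    - intros i j Hij. simpl.
      assert (INR i + 1 <= INR j) by (rewrite <- S_INR; apply le_INR; lia).
      rewrite Rabs_minus_sym, Rabs_right; nra.
    - intros k Hk. apply Hcov. split.
      + apply HE. pose proof (pos_INR k). pose proof (le_INR _ _ Hk). nra.
      + unfold dist1. rewrite Rabs_minus_sym, Rminus_0_r, Rabs_right.
        * pose proof (le_INR _ _ Hk). nra.
        * pose proof (pos_INR k). nra. }
  apply le_INR in Hcount. fold N in Hcount.
  replace (L / r) with (3 * N) in Hn by (unfold r; field; lra).
  rewrite <- Rpower_mult_distr in Hn by lra.
  unfold K in Hm. lra.
Qed.

Lemma assouad_dim_le_admissible {X : Type} (d : X -> X -> R) (E : X -> Prop) (s : R) :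
  assouad_admissible d E s -> Rbar_le (assouad_dim d E) (Finite s).
Proof. intros Hs. apply (Glb_Rbar_correct (assouad_admissible d E)), Hs. Qed.

Lemma assouad_dim_eq_least_admissible {X : Type} (d : X -> X -> R) (E : X -> Prop)
    (s0 : R) :
  assouad_admissible d E s0 -> (forall s, assouad_admissible d E s -> s0 <= s) ->
  assouad_dim d E = Finite s0.
Proof.
  intros Hs0 Hmin. apply is_glb_Rbar_unique. split.
  - intros s Hs. exact (Hmin s Hs).
  - intros l Hl. exact (Hl s0 Hs0).
Qed.

Theorem theorem4p4 (a b : R) (f : R -> R -> Prop) :
  a <= b ->
  (forall x, a <= x <= b -> nonempty_compact (f x)) ->
  hausdorff_continuous_on a b f ->
  Rbar_lt (Finite 1) (assouad_dim dist2 (graph_of a b f)) ->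
  assouad_dim dist1 (delta_set (graph_of a b f)) = Finite 1.
Proof.
  intros Hab Hf Hc Hdim.
  destruct (Rle_lt_or_eq_dec a b Hab) as [Hlt|<-].
  - apply assouad_dim_eq_least_admissible; [apply assouad_admissible_1_R|].
    intro s. apply (assouad_admissible_interval_ge_1 _ (b - a)); [lra|].
    exact (delta_set_contains_interval a b f Hab Hf Hc).
  - pose proof (assouad_dim_le_admissible _ _ _ (graph_degenerate_admissible_1 a f)).
    destruct (assouad_dim dist2 (graph_of a a f)); simpl in *; lra.
Qed.
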